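(* Let $\alpha,\beta\ge0$ with $b=\alpha+\beta\le n$, and let $\mathbf{s}=(s_1,\dots,s_k)$ be a switch pattern. Then $$f_{\alpha,\beta,\mathbf{s}}=\frac1{2^b}\sum_{j=0}^b\binom bj a_{\alpha,\beta}(j)\lambda_{n,j,\mathbf{s}},$$ where $a_{\alpha,0}(j)=1$ for all $\alpha\ge0$ and all $j$, and $$a_{\alpha,\beta}(j)=\frac{b-j}{b}a_{\alpha,\beta-1}(j)-\frac jb a_{\alpha,\beta-1}(j-1)\quad\text{for all }\alpha\ge0,\ \beta\ge1.$$
   Context: Lightbulb process on $n$ bulbs with $k$ stages and switch pattern $\mathbf{s}=(s_1,\dots,s_k)$: the initial (stage $0$) status $X_{0j}\in\{0,1\}$ of each bulb is given deterministically; at stage $r$ a uniformly random subset of exactly $s_r$ bulbs is toggled, independently across stages; $X_{rj}=1$ iff bulb $j$ is toggled at stage $r$, and $X_j=(\sum_{r=0}^kX_{rj})\bmod2$ is the indicator that bulb $j$ is on at the terminal time. Define $f_{\alpha,\beta,\mathbf{s}}=P(X_i=0,\ i=1,\dots,\alpha+\beta\mid X_{0i}=0,\ i=1,\dots,\alpha;\ X_{0i}=1,\ i=\alpha+1,\dots,\alpha+\beta)$. With $(n)_t=n(n-1)\cdots(n-t+1)$, $\lambda_{n,j,s}=\sum_{t=0}^j\binom jt(-2)^t\frac{(s)_t}{(n)_t}$ and $\lambda_{n,j,\mathbf{s}}=\prod_{r=1}^k\lambda_{n,j,s_r}$ (empty product $1$). In the recursion, values $a(-1)$ and $a(b)$ only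 appear multiplied by zero. *)

From mathcomp Require Import all_boot all_order all_algebra.
Set Implicit Arguments. Unset Strict Implicit. Unset Printing Implicit Defensive.
Import Order.TTheory GRing.Theory Num.Theory.
Local Open Scope ring_scope.

(* Sample space of the lightbulb process: a choice of the toggled subset
   T r of bulbs at each stage r < k = size s, with #|T r| = s_r.  The law
   is uniform on this finite set (uniform subsets, independent stages). *)
Definition switch_space (n : nat) (s : seq nat) :
  {set {ffun 'I_(size s) -> {set 'I_n}}} :=
  [set T : {ffun 'I_(size s) -> {set 'I_n}} | [forall r, #|T r| == nth 0%N s r]].

Definition bulb_on (n : nat) (s : seq nat) (X0 : 'I_n -> bool)
  (T : {ffun 'I_(size s) -> {set 'I_n}}) (j : 'I_n) : bool :=
  odd (X0 j + #|[set r | j \in T r]|).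

(* Probability that bulbs 0 .. b-1 (i.e. bulbs 1..b of the paper) are all
   off at the terminal time, given the deterministic initial status X0. *)
Definition f_prob (n : nat) (s : seq nat) (X0 : 'I_n -> bool) (b : nat) : rat :=
  (#|[set T in switch_space n s |
       [forall j : 'I_n, (j < b)%N ==> ~~ bulb_on X0 T j]]|)%:R
  / (#|switch_space n s|)%:R.

Fixpoint acoef (al be : nat) (j : nat) : rat :=
  match be with
  | 0%N => 1
  | be'.+1 =>
      let b := (al + be'.+1)%N in
      ((b - j)%N)%:R / b%:R * acoef al be' j
      - j%:R / b%:R * acoef al be' j.-1
  end.

Definition lam (n j s : nat) : rat :=
  \sum_(t < j.+1) ('C(j, t))%:R * (-2) ^+ t * (s ^_ t)%:R / (n ^_ t)%:R.

Definition lamS (n j : nat) (s : seq nat) : rat := \prod_(r <- s) lam n j r.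

From mathcomp Require Import all_boot all_order all_algebra.
From mathcomp Require Import ring zify.
Import Order.TTheory GRing.Theory Num.Theory.
Set Implicit Arguments. Unset Strict Implicit. Unset Printing Implicit Defensive.
Local Open Scope ring_scope.

(* Write the indicator that bulb i < b ends off as (1 + e_i (-1)^{c_i}) / 2,
   with e_i = -1 or 1 according to the initial status and c_i the number of
   stages toggling i, and expand the product over i < b as a sum over subsets
   S.  Averaging the sign (-1)^{|S ∩ T|} over a uniform s-subset T of n bulbs
   gives C(n,s) λ_{n,|S|,s}, the coefficient of X^s in (1-X)^{|S|}(1+X)^{n-|S|}.
   Grouping the subsets S by size, the total weight of the S of size j is the
   coefficient of X^j in (1+X)^α (1-X)^β, which is C(b,j) a_{α,β}(j). *)

Lemma prod_1D_subsets (I : finType) (R : comRingType) (w : I -> R) :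
  \prod_i (1 + w i) = \sum_(t : {set I}) \prod_(i in t) w i.
Proof.
transitivity (\prod_i \sum_(x : bool) (if x then w i else 1)).
  by apply: eq_bigr => i _; rewrite big_bool /= addrC.
rewrite bigA_distr_bigA /= (reindex (fun t : {set I} => [ffun i => i \in t])) /=.
  apply: eq_bigr => t _; rewrite [RHS]big_mkcond; apply: eq_bigr => i _.
  by rewrite ffunE.
exists (fun f : {ffun I -> bool} => [set i | f i]) => [t _| f _].
  by apply/setP => i; rewrite inE ffunE.
by apply/ffunP => i; rewrite ffunE inE.
Qed.

Lemma coef_prod_1DX (I : finType) (R : comRingType) (c : I -> R) (j : nat) :
  (\prod_i (1 + (c i)%:P * 'X))`_j = \sum_(t : {set I} | #|t| == j) \prod_(i in t) c i.
Proof.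
rewrite prod_1D_subsets coef_sum [RHS]big_mkcond; apply: eq_bigr => t _ /=.
rewrite big_split /= -rmorph_prod prodr_const coefCM coefXn eq_sym.
by case: eqP => _; rewrite ?mulr1 ?mulr0.
Qed.

Lemma coef_1DX_exp (R : comRingType) (a j : nat) :
  ((1 + 'X : {poly R}) ^+ a)`_j = ('C(a, j))%:R.
Proof.
elim: a j => [|a IH] j; first by rewrite expr0 coefC; case: j.
rewrite exprSr mulrDr mulr1 coefD coefMX IH.
by case: j => [|j] /=; rewrite ?addr0 ?bin0 // binS natrD IH.
Qed.

Lemma coef_acoef (al be j : nat) :
  ((1 + 'X : {poly rat}) ^+ al * (1 - 'X) ^+ be)`_j
  = ('C(al + be, j))%:R * acoef al be j.
Proof.
elim: be j => [|be IH] j; first by rewrite expr0 mulr1 addn0 coef_1DX_exp mulr1.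
rewrite exprSr mulrA mulrBr mulr1 coefB coefMX !IH /= addnS.
set b := (al + be)%N.
have b1_neq0 : (b.+1)%:R != 0 :> rat by rewrite pnatr_eq0.
case: j => [|m] /=; first by rewrite subr0 !bin0 subn0 !mul0r subr0 divff ?mul1r.
have binS_down : ('C(b, m.+1))%:R = ((b.+1 - m.+1)%N)%:R * ('C(b.+1, m.+1))%:R / (b.+1)%:R :> rat.
  by rewrite -natrM -mul_bin_down natrM mulrC mulKf.
have binS_diag : ('C(b, m))%:R = (m.+1)%:R * ('C(b.+1, m.+1))%:R / (b.+1)%:R :> rat.
  by rewrite -natrM -mul_bin_diag natrM mulrC mulKf.
by rewrite binS_down binS_diag; ring.
Qed.

Lemma bin_ffact_shift (n m t : nat) : (t <= m)%N -> (m <= n)%N ->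
  ('C(n, m) * m ^_ t = 'C(n - t, m - t) * n ^_ t)%N.
Proof.
move=> le_tm le_mn.
have le_tn : (t <= n)%N by apply: leq_trans le_mn.
have := bin_fact (leq_sub2r t le_mn); rewrite (_ : n - t - (m - t) = n - m)%N; last by lia.
move=> bin_nt.
apply/eqP; rewrite -(eqn_pmul2r (fact_gt0 (m - t))) -(eqn_pmul2r (fact_gt0 (n - m))).
apply/eqP; transitivity n`!.
  by rewrite -(bin_fact le_mn) -(ffact_fact le_tm); ring.
by rewrite -(ffact_fact le_tn) -bin_nt; ring.
Qed.

Lemma coef_1BX_1DX (n j m : nat) : (j <= n)%N -> (m <= n)%N ->
  ((1 - 'X : {poly rat}) ^+ j * (1 + 'X) ^+ (n - j))`_m = ('C(n, m))%:R * lam n j m.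
Proof.
move=> le_jn le_mn.
rewrite (_ : 1 - 'X = (1 + 'X) + (-2)%:P * 'X); last by rewrite polyCN polyC_natr; ring.
rewrite exprDn mulr_suml coef_sum /lam mulr_sumr.
apply: eq_bigr => -[t /= le_tj] _.
have le_tn : (t <= n)%N by apply: leq_trans le_jn.
rewrite (_ : _ *+ _ * _ = ((-2) ^+ t * ('C(j, t))%:R)%:P * ('X ^+ t * (1 + 'X) ^+ (n - t))); last first.
  rewrite (_ : n - t = j - t + (n - j))%N; last by lia.
  by rewrite exprD exprMn rmorphM rmorphXn /= -mulr_natr -polyC_natr; ring.
rewrite coefCM coefXnM; case: ltnP => [lt_mt|le_tm].
  by rewrite ffact_small // !(mulr0, mul0r).
have nt_neq0 : (n ^_ t)%:R != 0 :> rat by rewrite pnatr_eq0 -lt0n ffact_gt0.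
rewrite coef_1DX_exp -(mulfK nt_neq0 ('C(n - t, m - t))%:R) -natrM.
by rewrite -bin_ffact_shift // natrM; field.
Qed.

Definition toggle_sign (I : finType) (S t : {set I}) : rat :=
  \prod_(i in S) (if i \in t then -1 else 1).

Lemma toggle_signC (I : finType) (S t : {set I}) : toggle_sign S t = toggle_sign t S.
Proof.
rewrite /toggle_sign [LHS]big_mkcond [RHS]big_mkcond; apply: eq_bigr => i _.
by case: (i \in S); case: (i \in t).
Qed.

Lemma prod_1D_toggle_X (I : finType) (S : {set I}) :
  \prod_i (1 + (if i \in S then -1 else 1 : rat)%:P * 'X)
  = (1 - 'X) ^+ #|S| * (1 + 'X) ^+ #|~: S|.
Proof.
rewrite (bigID (mem S)) /= -!prodr_const.
congr (_ * _); apply: eq_big => i; rewrite ?inE //.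
  by move=> ->; rewrite polyCN mulN1r.
by move=> /negbTE ->; rewrite mul1r.
Qed.

Lemma sum_toggle_sign_card (n m : nat) (S : {set 'I_n}) : (m <= n)%N ->
  \sum_(t : {set 'I_n} | #|t| == m) toggle_sign S t = ('C(n, m))%:R * lam n #|S| m.
Proof.
move=> le_mn.
under eq_bigr => t _ do rewrite toggle_signC.
rewrite -(coef_prod_1DX (fun i => if i \in S then -1 else 1)) prod_1D_toggle_X.
rewrite [#|~: S|]cardsCs setCK card_ord coef_1BX_1DX //.
by rewrite -[leqRHS]card_ord max_card.
Qed.

Lemma sum_switch_space_toggle (n : nat) (s : seq nat) (S : {set 'I_n}) :
  all (fun sr => sr <= n)%N s ->
  \sum_(T in switch_space n s) \prod_(r : 'I_(size s)) toggle_sign S (T r)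
  = (\prod_(x <- s) ('C(n, x))%:R) * lamS n #|S| s.
Proof.
move=> s_le_n.
transitivity (\prod_(r : 'I_(size s))
                \sum_(t : {set 'I_n} | #|t| == nth 0%N s r) toggle_sign S t).
  rewrite bigA_distr_big_dep; apply: eq_bigl => T.
  by rewrite inE; apply/forallP/familyP.
transitivity (\prod_(r : 'I_(size s)) (('C(n, nth 0%N s r))%:R * lam n #|S| (nth 0%N s r))).
  by apply: eq_bigr => r _; rewrite sum_toggle_sign_card ?(allP s_le_n) ?mem_nth.
by rewrite big_split /lamS; congr (_ * _); rewrite [RHS](big_nth 0%N) big_mkord.
Qed.

Lemma card_switch_space (n : nat) (s : seq nat) : all (fun sr => sr <= n)%N s ->
  (#|switch_space n s|)%:R = \prod_(x <- s) ('C(n, x))%:R :> rat.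
Proof.
move=> s_le_n.
have lamS_n0 : lamS n 0 s = 1.
  by rewrite /lamS big1 // => x _; rewrite /lam big_ord1 bin0 !ffactn0 divr1 !mulr1.
have := sum_switch_space_toggle set0 s_le_n; rewrite cards0 lamS_n0 mulr1 => <-.
rewrite -sum1_card natr_sum; apply: eq_bigr => T _.
by rewrite big1 // => r _; rewrite /toggle_sign big_set0.
Qed.

Lemma forall_indicator_prod (I : finType) (P : pred I) :
  (if [forall i, P i] then 1 else 0 : rat) = \prod_i (if P i then 1 else 0).
Proof.
case: ifP => [/forallP P_all | /negbT].
  by rewrite big1 // => i _; rewrite P_all.
by rewrite negb_forall => /existsP [i /negbTE Pi_false]; rewrite (bigD1 i) //= Pi_false mul0r.
Qed.

Lemma even_indicator (x : bool) (c : nat) :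
  (if ~~ odd (x + c) then 1 else 0 : rat) = (1 + (if x then -1 else 1) * (-1) ^+ c) / 2.
Proof. by rewrite -signr_odd oddD; case: x; case: (odd c) => /=; field. Qed.

Definition init_sign (n : nat) (X0 : 'I_n -> bool) (b : nat) (i : 'I_n) : rat :=
  if (i < b)%N then (if X0 i then -1 else 1) else 0.

Lemma bulbs_off_indicator (n b : nat) (s : seq nat) (X0 : 'I_n -> bool)
    (T : {ffun 'I_(size s) -> {set 'I_n}}) : (b <= n)%N ->
  (if [forall j : 'I_n, (j < b)%N ==> ~~ bulb_on X0 T j] then 1 else 0 : rat)
  = (1 / 2) ^+ b * \sum_(S : {set 'I_n})
      (\prod_(i in S) init_sign X0 b i) * \prod_(r : 'I_(size s)) toggle_sign S (T r).
Proof.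
move=> le_bn.
pose e (i : 'I_n) := \prod_(r : 'I_(size s)) (if i \in T r then -1 else 1 : rat).
rewrite forall_indicator_prod.
transitivity (\prod_(i : 'I_n)
                ((if (i < b)%N then 1 / 2 else 1) * (1 + init_sign X0 b i * e i))).
  apply: eq_bigr => i _; rewrite /init_sign; case: (i < b)%N => /=; last first.
    by rewrite mul0r addr0 mulr1.
  rewrite /bulb_on even_indicator mul1r mulrC; congr (_ * (1 + _ * _)).
  by rewrite -prodr_const big_mkcond; apply: eq_bigr => r _; rewrite inE.
rewrite big_split /=; congr (_ * _).
  by rewrite -big_mkcond -(big_ord_widen n (fun=> 1 / 2)) // prodr_const card_ord.
rewrite prod_1D_subsets; apply: eq_bigr => S _.
by rewrite big_split /= exchange_big.
Qed.

Lemma sum_subsets_by_card (I : finType) (R : comRingType) (F : {set I} -> R) (G : nat -> R) :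
  \sum_(S : {set I}) F S * G #|S|
  = \sum_(j < #|I|.+1) (\sum_(S : {set I} | #|S| == j) F S) * G j.
Proof.
rewrite (partition_big (fun S : {set I} => inord #|S| : 'I_#|I|.+1) xpredT) //=.
apply: eq_bigr => j _; rewrite mulr_suml.
have card_inord (S : {set I}) : (inord #|S| == j :> 'I_#|I|.+1) = (#|S| == j).
  by rewrite -val_eqE /= inordK // ltnS max_card.
by apply: eq_big => S; rewrite card_inord // => /eqP ->.
Qed.

Lemma card_bulbs_off (n b : nat) (s : seq nat) (X0 : 'I_n -> bool) :
  (b <= n)%N -> all (fun sr => sr <= n)%N s ->
  (#|[set T in switch_space n s | [forall j : 'I_n, (j < b)%N ==> ~~ bulb_on X0 T j]]|)%:R
  = (1 / 2) ^+ b * (\prod_(x <- s) ('C(n, x))%:R) *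
    \sum_(S : {set 'I_n}) (\prod_(i in S) init_sign X0 b i) * lamS n #|S| s.
Proof.
move=> le_bn s_le_n.
transitivity (\sum_(T in switch_space n s)
                (if [forall j : 'I_n, (j < b)%N ==> ~~ bulb_on X0 T j] then 1 else 0 : rat)).
  rewrite -sum1_card natr_sum [LHS]big_mkcond [RHS]big_mkcond.
  by apply: eq_bigr => T _; rewrite inE; case: (T \in switch_space n s).
rewrite (eq_bigr _ (fun T _ => bulbs_off_indicator X0 T le_bn)).
rewrite -mulr_sumr exchange_big -mulrA; congr (_ * _).
rewrite mulr_sumr; apply: eq_bigr => S _.
by rewrite -mulr_sumr sum_switch_space_toggle // mulrCA.
Qed.

Lemma prod_1D_init_sign (n al be : nat) (X0 : 'I_n -> bool) :
  (al + be <= n)%N ->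
  (forall i : 'I_n, (i < al)%N -> X0 i = false) ->
  (forall i : 'I_n, (al <= i < al + be)%N -> X0 i = true) ->
  \prod_(i : 'I_n) (1 + (init_sign X0 (al + be) i)%:P * 'X)
  = (1 + 'X) ^+ al * (1 - 'X) ^+ be.
Proof.
move=> le_bn X0_off X0_on.
pose G (k : nat) : {poly rat} :=
  if (k < al)%N then 1 + 'X else if (k < al + be)%N then 1 - 'X else 1.
rewrite (eq_bigr (fun i : 'I_n => G i)) => [|i _]; last first.
  rewrite /G /init_sign; case: (ltnP i al) => [lt_ial | le_ali].
    by rewrite X0_off // ltn_addr // mul1r.
  case: ifP => [lt_ib | _]; last by rewrite mul0r addr0.
  by rewrite X0_on ?le_ali // polyCN mulN1r.
rewrite -(big_mkord xpredT G) (big_cat_nat (leq0n (al + be)) le_bn).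
rewrite (big_cat_nat (leq0n al) (leq_addr be al)) /=.
have prod_al : \prod_(0 <= k < al) G k = (1 + 'X) ^+ al.
  rewrite -{2}(subn0 al) -prodr_const_nat; apply: eq_big_nat => k /andP [_ lt_kal].
  by rewrite /G lt_kal.
have prod_be : \prod_(al <= k < al + be) G k = (1 - 'X) ^+ be.
  rewrite -{2}(addKn al be) -prodr_const_nat; apply: eq_big_nat => k /andP [le_alk lt_kb].
  by rewrite /G ltnNge le_alk lt_kb.
have prod_rest : \prod_(al + be <= k < n) G k = 1.
  rewrite big_nat_cond big1 // => k /andP [/andP [le_bk _] _].
  by rewrite /G !ltnNge le_bk (leq_trans (leq_addr be al) le_bk).
by rewrite prod_al prod_be prod_rest mulr1.
Qed.

Theorem lemma4p4 (n al be : nat) (s : seq nat) (X0 : 'I_n -> bool) :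
  (al + be <= n)%N ->
  all (fun sr => sr <= n)%N s ->
  (forall i : 'I_n, (i < al)%N -> X0 i = false) ->
  (forall i : 'I_n, (al <= i < al + be)%N -> X0 i = true) ->
  f_prob s X0 (al + be) =
  1 / 2 ^+ (al + be) *
  \sum_(j < (al + be).+1)
     ('C(al + be, j))%:R * acoef al be j * lamS n j s.
Proof.
move=> le_bn s_le_n X0_off X0_on.
have Cs_neq0 : \prod_(x <- s) ('C(n, x))%:R != 0 :> rat.
  by rewrite prodf_seq_neq0; apply/allP => x /(allP s_le_n) le_xn; rewrite pnatr_eq0 -lt0n bin_gt0.
rewrite /f_prob card_bulbs_off // card_switch_space // mulrAC mulfK // expr_div_n expr1n.
rewrite (sum_subsets_by_card (fun S => \prod_(i in S) init_sign X0 (al + be) i)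
                            (fun j => lamS n j s)) card_ord.
congr (_ * _).
rewrite [RHS](big_ord_widen n.+1 (fun j => ('C(al + be, j))%:R * acoef al be j * lamS n j s)) //.
rewrite [RHS]big_mkcond; apply: eq_bigr => j _.
rewrite -coef_prod_1DX prod_1D_init_sign // coef_acoef.
by case: ltnP => // lt_bj; rewrite bin_small // !mul0r.
Qed.
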